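(* Let $R\in\mathbb C^{n\times n}$ be such that $\tilde R=\frac12(R+R^* )$ is positive definite, and let $\bar R=\frac12(R-R^* )$. Then: (1) $R$ is invertible; (2) $\frac12(R^{-1}+(R^* )^{-1})$ is positive definite; (3) $\left(\frac{R+R^*}{2}\right)^{-1}\succcurlyeq\frac{R^{-1}+(R^* )^{-1}}{2}$; (4) $\frac{R+R^*}{2}\succcurlyeq\frac{R^*R^{-1}R^*+R(R^* )^{-1}R}{2}$; (5) for $-1\le\alpha\le1$ let $W_\alpha=\tilde R+\alpha\bar R$; then for all $\alpha,\beta\in[-1,1]$ with $|\alpha|\le|\beta|$, \[ \frac{W_\alpha^{-1}+(W_\alpha^* )^{-1}}{2}\succcurlyeq\frac{W_\beta^{-1}+(W_\beta^* )^{-1}}{2}. \]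
   Context: $M^*$ is the conjugate transpose. For Hermitian $X,Y$, $X\succcurlyeq Y$ means $X-Y$ is positive semidefinite. *)

From HB Require Import structures.
From mathcomp Require Import all_boot all_order all_algebra.
Set Implicit Arguments. Unset Strict Implicit. Unset Printing Implicit Defensive.
Import Order.TTheory GRing.Theory Num.Theory.
Local Open Scope ring_scope.

Definition ctmx (C : numClosedFieldType) (m n : nat) (M : 'M[C]_(m, n)) : 'M[C]_(n, m) :=
  (map_mx Num.conj M)^T.

Definition hermitianmx (C : numClosedFieldType) (n : nat) (M : 'M[C]_n) : Prop :=
  ctmx M = M.

Definition posdefmx (C : numClosedFieldType) (n : nat) (M : 'M[C]_n) : Prop :=
  hermitianmx M /\ forall v : 'cV[C]_n, v != 0 -> 0 < (ctmx v *m M *m v) 0 0.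

Definition psdmx (C : numClosedFieldType) (n : nat) (M : 'M[C]_n) : Prop :=
  hermitianmx M /\ forall v : 'cV[C]_n, 0 <= (ctmx v *m M *m v) 0 0.

Definition loewner_ge (C : numClosedFieldType) (n : nat) (X Y : 'M[C]_n) : Prop :=
  psdmx (X - Y).

(* Split R = H + K into its Hermitian part H (positive definite) and its
   skew-Hermitian part K.  For any X whose Hermitian part H is invertible,
   (X^-1 + X^-* )/2 = X^-1 H X^-* = (X^* H^-1 X)^-1, and for W = H + aK with a
   real, W^* H^-1 W = H + a^2 K^* H^-1 K, which grows with a^2 in the Loewner
   order.  Inversion reverses the Loewner order, giving (5); (3) is its case
   a = 0, b = 1, and (4) is the congruence of (3) by H, because
   H - (R^* R^-1 R^* + R R^-* R)/2 = 4 H (H^-1 - (R^-1 + R^-* )/2) H. *)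

From Pilot Require Import Defs.
From HB Require Import structures.
From mathcomp Require Import all_boot all_order all_algebra.
From mathcomp Require Import ring.
Import Order.TTheory GRing.Theory Num.Theory.
Local Open Scope ring_scope.

Set Implicit Arguments. Unset Strict Implicit. Unset Printing Implicit Defensive.

(* [all_algebra] also exports a [hermitianmx], for sesquilinear forms. *)
Local Notation hermitianmx := Defs.hermitianmx.

Lemma scaler_half_double (F : numFieldType) (V : lmodType F) (v : V) :
  2^-1 *: (v + v) = v.
Proof. by rewrite -mulr2n -scaler_nat scalerA mulVf ?pnatr_eq0 // scale1r. Qed.

Lemma invmx_mul (R : comUnitRingType) n (A B : 'M[R]_n) :
  A \in unitmx -> B \in unitmx -> invmx (A *m B) = invmx B *m invmx A.
Proof.
move=> uA uB; have uAB : A *m B \in unitmx by rewrite unitmx_mul uA.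
have AB_inv : A *m B *m (invmx B *m invmx A) = 1%:M.
  by rewrite mulmxA (mulmxK uB) (mulmxV uA).
by rewrite -[LHS]mulmx1 -AB_inv mulmxA (mulVmx uAB) mul1mx.
Qed.

Lemma inj_mulmx_unitmx (F : fieldType) n (A : 'M[F]_n) :
  (forall v : 'cV[F]_n, A *m v = 0 -> v = 0) -> A \in unitmx.
Proof.
move=> injA; rewrite unitmxE unitfE -det_tr; apply/det0P => -[v v0 vA].
have := injA v^T; rewrite -[A]trmxK -trmx_mul vA trmx0 => /(_ erefl) /eqP.
by rewrite trmx_eq0 (negPf v0).
Qed.

Lemma mulmx_subl_invmx (R : comUnitRingType) n (A X : 'M[R]_n) :
  X \in unitmx -> (A - X) *m invmx X *m (A - X) = A *m invmx X *m A - A - A + X.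
Proof.
move=> uX; rewrite mulmxBl (mulmxV uX) mulmxBl mul1mx mulmxBr (mulmxKV uX).
by rewrite opprB addrA addrAC.
Qed.

Section ConjugateTranspose.
Variable C : numClosedFieldType.

Lemma ctmxK m n (A : 'M[C]_(m, n)) : ctmx (ctmx A) = A.
Proof. by apply/matrixP=> i j; rewrite !mxE conjCK. Qed.

Lemma ctmxD m n (A B : 'M[C]_(m, n)) : ctmx (A + B) = ctmx A + ctmx B.
Proof. by apply/matrixP=> i j; rewrite !mxE rmorphD. Qed.

Lemma ctmxN m n (A : 'M[C]_(m, n)) : ctmx (- A) = - ctmx A.
Proof. by apply/matrixP=> i j; rewrite !mxE rmorphN. Qed.

Lemma ctmxB m n (A B : 'M[C]_(m, n)) : ctmx (A - B) = ctmx A - ctmx B.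
Proof. by rewrite ctmxD ctmxN. Qed.

Lemma ctmxZ m n (a : C) (A : 'M[C]_(m, n)) : ctmx (a *: A) = a^* *: ctmx A.
Proof. by apply/matrixP=> i j; rewrite !mxE rmorphM. Qed.

Lemma ctmx_mul m n p (A : 'M[C]_(m, n)) (B : 'M[C]_(n, p)) :
  ctmx (A *m B) = ctmx B *m ctmx A.
Proof. by rewrite /ctmx map_mxM trmx_mul. Qed.

Lemma ctmx_inv n (A : 'M[C]_n) : ctmx (invmx A) = invmx (ctmx A).
Proof. by rewrite /ctmx map_invmx trmx_inv. Qed.

Lemma unitmx_ct n (A : 'M[C]_n) : (ctmx A \in unitmx) = (A \in unitmx).
Proof. by rewrite /ctmx unitmx_tr map_unitmx. Qed.

Lemma ctmx11 (A : 'M[C]_1) : ctmx A 0 0 = (A 0 0)^*.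
Proof. by rewrite !mxE. Qed.

End ConjugateTranspose.

Section Positivity.
Variables (C : numClosedFieldType) (n : nat).
Implicit Types A B P Q X : 'M[C]_n.

Lemma hermitian_congr A X : hermitianmx A -> hermitianmx (ctmx X *m A *m X).
Proof. by rewrite /hermitianmx => hA; rewrite !ctmx_mul ctmxK hA mulmxA. Qed.

Lemma hermitian_inv A : hermitianmx A -> hermitianmx (invmx A).
Proof. by rewrite /hermitianmx ctmx_inv => ->. Qed.

Lemma ctmx_congr_form (v : 'cV[C]_n) A X :
  ctmx v *m (ctmx X *m A *m X) *m v = ctmx (X *m v) *m A *m (X *m v).
Proof. by rewrite ctmx_mul !mulmxA. Qed.

Lemma psdmx_congr A X : psdmx A -> psdmx (ctmx X *m A *m X).
Proof.
case=> hA pA; split; first exact: hermitian_congr.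
by move=> v; rewrite ctmx_congr_form.
Qed.

Lemma psdmxD A B : psdmx A -> psdmx B -> psdmx (A + B).
Proof.
case=> hA pA [hB pB]; split; first by rewrite /hermitianmx ctmxD hA hB.
by move=> v; rewrite mulmxDr mulmxDl mxE addr_ge0.
Qed.

Lemma psdmxZ (c : C) A : 0 <= c -> psdmx A -> psdmx (c *: A).
Proof.
move=> c0 [hA pA]; split; first by rewrite /hermitianmx ctmxZ hA geC0_conj.
by move=> v; rewrite -scalemxAr -scalemxAl mxE mulr_ge0.
Qed.

Lemma posdefmx_psd A : posdefmx A -> psdmx A.
Proof.
case=> hA pA; split=> // v; have [->|v0] := eqVneq v 0; last exact/ltW/pA.
by rewrite mulmx0 mxE.
Qed.

Lemma posdefmx_congr A X : posdefmx A -> X \in unitmx ->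
  posdefmx (ctmx X *m A *m X).
Proof.
case=> hA pA uX; split; first exact: hermitian_congr.
move=> v v0; rewrite ctmx_congr_form; apply: pA.
by apply: contra v0 => /eqP Xv0; rewrite -(mulKmx uX v) Xv0 mulmx0.
Qed.

Lemma loewner_ge_invmx P Q : psdmx P -> P \in unitmx -> Q \in unitmx ->
  loewner_ge Q P -> loewner_ge (invmx P) (invmx Q).
Proof.
move=> psdP uP uQ psdQP; have hP := psdP.1.
have hQ : hermitianmx Q by rewrite -(subrK P Q) /hermitianmx ctmxD psdQP.1 hP.
rewrite /loewner_ge; set D := invmx Q - invmx P.
have -> : invmx P - invmx Q = ctmx D *m P *m D + ctmx (invmx Q) *m (Q - P) *m invmx Q.
  rewrite /D ctmxB !ctmx_inv hP hQ mulmxBl (mulVmx uP) mulmxBl !mulmxBr.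
  rewrite (mulmxK uP) mul1mx (mulVmx uQ) mulmxBl !mul1mx [RHS]addrC.
  by rewrite !addrA subrK subrr add0r opprB.
by apply: psdmxD; apply: psdmx_congr.
Qed.
End Positivity.

Section HermitianPart.
Variables (C : numClosedFieldType) (n : nat).
Implicit Types H K X : 'M[C]_n.

Definition hermpart X := 2^-1 *: (X + ctmx X).
Definition skewpart X := 2^-1 *: (X - ctmx X).

Lemma conj_half : (2^-1 : C)^* = 2^-1.
Proof. by rewrite geC0_conj // invr_ge0 ler0n. Qed.

Lemma hermitian_hermpart X : hermitianmx (hermpart X).
Proof. by rewrite /hermitianmx /hermpart ctmxZ conj_half ctmxD ctmxK addrC. Qed.

Lemma hermpart_id H : hermitianmx H -> hermpart H = H.
Proof. by rewrite /hermpart => ->; rewrite scaler_half_double. Qed.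

Lemma ctmx_skewpart X : ctmx (skewpart X) = - skewpart X.
Proof. by rewrite /skewpart ctmxZ conj_half ctmxB ctmxK -scalerN opprB. Qed.

Lemma hermpart_add_skewpart X : hermpart X + skewpart X = X.
Proof.
by rewrite /hermpart /skewpart -scalerDr addrACA subrr addr0 scaler_half_double.
Qed.

Lemma hermpart_addZ_skew H K (a : C) : hermitianmx H -> ctmx K = - K ->
  a \is Num.real -> hermpart (H + a *: K) = H.
Proof.
move=> hH sK ra; rewrite /hermpart ctmxD ctmxZ hH sK conj_Creal // scalerN.
by rewrite addrACA subrr addr0 scaler_half_double.
Qed.

Lemma posdefmx_hermpart_unitmx X : posdefmx (hermpart X) -> X \in unitmx.
Proof.
case=> _ posX; apply: inj_mulmx_unitmx => v Xv0; apply/eqP; apply: contraT => v0.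
have := posX v v0; rewrite /hermpart -scalemxAr -scalemxAl mxE.
have form0 : (ctmx v *m X *m v) 0 0 = 0 by rewrite -mulmxA Xv0 mulmx0 mxE.
rewrite mulmxDr mulmxDl mxE form0 add0r.
have -> : ctmx v *m ctmx X *m v = ctmx (ctmx v *m X *m v).
  by rewrite !ctmx_mul ctmxK mulmxA.
by rewrite ctmx11 form0 conjC0 mulr0 ltxx.
Qed.

Lemma posdefmx_unitmx H : posdefmx H -> H \in unitmx.
Proof.
by move=> posH; apply: posdefmx_hermpart_unitmx; rewrite hermpart_id //; case: posH.
Qed.

Lemma posdefmx_inv H : posdefmx H -> posdefmx (invmx H).
Proof.
move=> posH; have uH := posdefmx_unitmx posH.
have -> : invmx H = ctmx (invmx H) *m H *m invmx H.
  by rewrite ctmx_inv posH.1 (mulVmx uH) mul1mx.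
by apply: posdefmx_congr; rewrite ?unitmx_inv.
Qed.

Lemma hermpart_invmx X : X \in unitmx ->
  hermpart (invmx X) = invmx X *m hermpart X *m ctmx (invmx X).
Proof.
move=> uX; have uXt : ctmx X \in unitmx by rewrite unitmx_ct.
rewrite /hermpart ctmx_inv -scalemxAr -scalemxAl; congr (_ *: _).
by rewrite mulmxDr (mulVmx uX) mulmxDl mul1mx (mulmxK uXt) addrC.
Qed.

Lemma hermpart_invmx_congr X : X \in unitmx -> hermpart X \in unitmx ->
  hermpart (invmx X) = invmx (ctmx X *m invmx (hermpart X) *m X).
Proof.
move=> uX uH; have uXt : ctmx X \in unitmx by rewrite unitmx_ct.
rewrite hermpart_invmx // ctmx_inv invmx_mul ?unitmx_mul ?uXt ?unitmx_inv //.
by rewrite invmx_mul ?unitmx_inv // invmxK mulmxA.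
Qed.

Lemma posdefmx_hermpart_inv X :
  posdefmx (hermpart X) -> posdefmx (hermpart (invmx X)).
Proof.
move=> posX; have uX := posdefmx_hermpart_unitmx posX.
rewrite hermpart_invmx // -{1}[invmx X]ctmxK.
by apply: posdefmx_congr; rewrite // unitmx_ct unitmx_inv.
Qed.

End HermitianPart.

Section Monotonicity.
Variables (C : numClosedFieldType) (n : nat).
Implicit Types H K X : 'M[C]_n.

Lemma congr_invmx_addZ_skew H K (c : C) :
  hermitianmx H -> H \in unitmx -> ctmx K = - K -> c \is Num.real ->
  ctmx (H + c *: K) *m invmx H *m (H + c *: K)
    = H + (c * c) *: (ctmx K *m invmx H *m K).
Proof.
move=> hH uH sK rc; rewrite ctmxD ctmxZ hH sK conj_Creal // scalerN.
rewrite mulmxBl (mulmxV uH) -scalemxAl mulmxBl mul1mx -scalemxAl mulmxDr.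
rewrite (mulmxKV uH) -scalemxAr scalerDr !mulNmx scalerN opprD addrA addrK.
by rewrite scalerA.
Qed.

Lemma loewner_ge_hermpart_inv_skew H K (a b : C) :
  posdefmx H -> ctmx K = - K -> a \is Num.real -> b \is Num.real ->
  `|a| <= `|b| ->
  loewner_ge (hermpart (invmx (H + a *: K))) (hermpart (invmx (H + b *: K))).
Proof.
move=> posH sK ra rb ab; have hH := posH.1; have uH := posdefmx_unitmx posH.
have psdHi := posdefmx_psd (posdefmx_inv posH).
have hermW c : c \is Num.real -> hermpart (H + c *: K) = H.
  by move=> rc; rewrite hermpart_addZ_skew.
have uW c : c \is Num.real -> H + c *: K \in unitmx.
  by move=> rc; apply: posdefmx_hermpart_unitmx; rewrite hermW.
have uWHW c : c \is Num.real ->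
    ctmx (H + c *: K) *m invmx H *m (H + c *: K) \in unitmx.
  by move=> rc; rewrite !unitmx_mul unitmx_ct uW // unitmx_inv uH.
rewrite !hermpart_invmx_congr ?hermW ?uW //.
apply: loewner_ge_invmx; rewrite ?uWHW //; first exact: psdmx_congr.
rewrite /loewner_ge !congr_invmx_addZ_skew // opprD addrACA subrr add0r.
rewrite -scalerBl; apply: psdmxZ; last exact: psdmx_congr.
have := ler_pM (normr_ge0 a) (normr_ge0 a) ab ab.
by rewrite -!expr2 !real_normK // subr_ge0.
Qed.

Lemma loewner_ge_inv_hermpart X : posdefmx (hermpart X) ->
  loewner_ge (invmx (hermpart X)) (hermpart (invmx X)).
Proof.
move=> posX.
have := loewner_ge_hermpart_inv_skew posX (ctmx_skewpart X) (real0 _) (real1 _).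
rewrite normr0 normr1 ler01 scale0r addr0 scale1r hermpart_add_skewpart.
by rewrite (hermpart_id (hermitian_inv posX.1)); apply.
Qed.

Lemma hermpart_sub_sandwich X : X \in unitmx -> hermpart X \in unitmx ->
  hermpart X - 2^-1 *: (ctmx X *m invmx X *m ctmx X + X *m invmx (ctmx X) *m X)
  = 4 *: (ctmx (hermpart X) *m (invmx (hermpart X) - hermpart (invmx X))
            *m hermpart X).
Proof.
(* With A = X + X^*, both sandwiches expand by [mulmx_subl_invmx]; what is left
   is linear in A X^-1 A and A X^-* A, so it can be checked entrywise. *)
move=> uX uH; have uXt : ctmx X \in unitmx by rewrite unitmx_ct.
rewrite hermitian_hermpart mulmxBr mulmxBl (mulmxV uH) mul1mx.
rewrite /hermpart ctmx_inv; move defA: (X + ctmx X) => A.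
have -> : ctmx X *m invmx X *m ctmx X = A *m invmx X *m A - A - A + X.
  by rewrite -mulmx_subl_invmx // -defA addrC addKr.
have -> : X *m invmx (ctmx X) *m X = A *m invmx (ctmx X) *m A - A - A + ctmx X.
  by rewrite -mulmx_subl_invmx // -defA addrK.
rewrite -!scalemxAl -!scalemxAr mulmxDr -!scalemxAl mulmxDl.
move: (A *m invmx X *m A) (A *m invmx (ctmx X) *m A) => P1 P2.
rewrite -defA; move: (ctmx X) => Y.
by apply/matrixP => i j; rewrite !mxE; field.
Qed.

Lemma loewner_ge_hermpart_sandwich X : posdefmx (hermpart X) ->
  loewner_ge (hermpart X)
    (2^-1 *: (ctmx X *m invmx X *m ctmx X + X *m invmx (ctmx X) *m X)).
Proof.
move=> posX; rewrite /loewner_ge hermpart_sub_sandwich.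
- by apply: psdmxZ; [rewrite ler0n | exact/psdmx_congr/loewner_ge_inv_hermpart].
- exact: posdefmx_hermpart_unitmx.
- exact: posdefmx_unitmx.
Qed.

End Monotonicity.

Theorem lemma5p26 (C : numClosedFieldType) (n : nat) (R : 'M[C]_n) :
  posdefmx (2^-1 *: (R + ctmx R)) ->
  let Rt := 2^-1 *: (R + ctmx R) in
  let Rb := 2^-1 *: (R - ctmx R) in
  let W := fun a : C => Rt + a *: Rb in
  [/\ R \in unitmx,
      posdefmx (2^-1 *: (invmx R + invmx (ctmx R))),
      loewner_ge (invmx Rt) (2^-1 *: (invmx R + invmx (ctmx R))),
      loewner_ge Rt
        (2^-1 *: (ctmx R *m invmx R *m ctmx R + R *m invmx (ctmx R) *m R))
    & forall a b : C, a \is Num.real -> b \is Num.real ->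
        -1 <= a <= 1 -> -1 <= b <= 1 -> `|a| <= `|b| ->
        loewner_ge (2^-1 *: (invmx (W a) + invmx (ctmx (W a))))
                   (2^-1 *: (invmx (W b) + invmx (ctmx (W b))))].
Proof.
move=> posRt Rt Rb W; split.
- exact: posdefmx_hermpart_unitmx.
- by rewrite -ctmx_inv; apply: posdefmx_hermpart_inv.
- by rewrite -ctmx_inv; apply: loewner_ge_inv_hermpart.
- exact: loewner_ge_hermpart_sandwich.
- move=> a b ra rb _ _ ab; rewrite -!ctmx_inv.
  exact: loewner_ge_hermpart_inv_skew posRt (ctmx_skewpart R) ra rb ab.
Qed.
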